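(* Let $q\ge 7$ and $s\in[1,7]$ be integers, $C$ a finite set with $|C|=2q+s$, and $M\in\mathcal M(6,q,C)$. If $\{i,j,k,l,m,n\}=\{1,\dots,6\}$ and $r(i,j,k)\ge 1$, then $r(l,m,n)\le 9$.
   Context: $\mathcal M(6,q,C)$ is the set of $6\times q$ matrices $M$ with entries from $C$ such that each row has $q$ pairwise distinct entries, each column has $6$ pairwise distinct entries, and every pair of distinct colours of $C$ appears together in some row or some column of $M$. The frequency of a colour is the number of entries of $M$ equal to it. For three distinct rows $a,b,c$, $r(a,b,c)$ is the number of colours of frequency exactly $3$ appearing in each of the rows $a,b,c$. *)

From mathcomp Require Import all_boot.
Set Implicit Arguments. Unset Strict Implicit. Unset Printing Implicit Defensive.

(* A 6 x q matrix with entries in C, given as M i j (row i, column j). *)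
Definition in_row (C : finType) (q : nat) (M : 'I_6 -> 'I_q -> C) (i : 'I_6) (x : C) : bool :=
  [exists j : 'I_q, M i j == x].
Definition in_col (C : finType) (q : nat) (M : 'I_6 -> 'I_q -> C) (j : 'I_q) (x : C) : bool :=
  [exists i : 'I_6, M i j == x].

Definition in_Mclass (C : finType) (q : nat) (M : 'I_6 -> 'I_q -> C) : Prop :=
  (forall i : 'I_6, injective (M i)) /\
  (forall j : 'I_q, injective (fun i : 'I_6 => M i j)) /\
  (forall x y : C, x != y ->
     (exists i : 'I_6, in_row M i x && in_row M i y) \/
     (exists j : 'I_q, in_col M j x && in_col M j y)).

Definition freq (C : finType) (q : nat) (M : 'I_6 -> 'I_q -> C) (x : C) : nat :=
  #|[set p : 'I_6 * 'I_q | M p.1 p.2 == x]|.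

Definition rcount (C : finType) (q : nat) (M : 'I_6 -> 'I_q -> C) (a b c : 'I_6) : nat :=
  #|[set x : C | (freq M x == 3) && [&& in_row M a x, in_row M b x & in_row M c x]]|.

From mathcomp Require Import all_boot.

Set Implicit Arguments.
Unset Strict Implicit.
Unset Printing Implicit Defensive.

(* A colour x of frequency 3 met in rows i, j, k occurs in no other row and in
   at most three columns.  A colour y counted by r(l,m,n) occurs only in rows
   l, m, n, so it never shares a row with x; hence it shares a column with x
   and is one of the nine entries of the 3 x 3 submatrix on rows l, m, n and
   the columns of x. *)

Section ColourPositions.

Variables (C : finType) (q : nat) (M : 'I_6 -> 'I_q -> C).

Definition rows_of (x : C) : {set 'I_6} := [set i | in_row M i x].
Definition cols_of (x : C) : {set 'I_q} := [set j | in_col M j x].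

Definition positions (x : C) : {set 'I_6 * 'I_q} :=
  [set p : 'I_6 * 'I_q | M p.1 p.2 == x].

Lemma rows_of_positions (x : C) : rows_of x = [set p.1 | p in positions x].
Proof.
apply/setP => i; rewrite inE; apply/existsP/imsetP => [[j Mij] | [[i' j] Mij ->]].
  by exists (i, j); rewrite ?inE.
by exists j; rewrite inE in Mij.
Qed.

Lemma cols_of_positions (x : C) : cols_of x = [set p.2 | p in positions x].
Proof.
apply/setP => j; rewrite inE; apply/existsP/imsetP => [[i Mij] | [[i j'] Mij ->]].
  by exists (i, j); rewrite ?inE.
by exists i; rewrite inE in Mij.
Qed.

Lemma card_rows_of_le_freq (x : C) : #|rows_of x| <= freq M x.
Proof. by rewrite rows_of_positions leq_imset_card. Qed.

Lemma card_cols_of_le_freq (x : C) : #|cols_of x| <= freq M x.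
Proof. by rewrite cols_of_positions leq_imset_card. Qed.

Lemma rows_of_eq_freq (x : C) (R : {set 'I_6}) :
  R \subset rows_of x -> freq M x <= #|R| -> rows_of x = R.
Proof.
move=> sub_R freq_le; apply/eqP; rewrite eq_sym eqEcard sub_R /=.
exact: leq_trans (card_rows_of_le_freq x) freq_le.
Qed.

Lemma rows_of_freq_seq (x : C) (s : seq 'I_6) :
  uniq s -> freq M x <= size s -> all (in_row M ^~ x) s ->
  rows_of x = [set i in s].
Proof.
move=> uniq_s freq_le /allP s_rows; apply: rows_of_eq_freq.
  by apply/subsetP => i; rewrite !inE => /s_rows.
by rewrite cardsE (card_uniqP uniq_s).
Qed.

Lemma rows_of_freq3 (x : C) (a b c : 'I_6) : uniq [:: a; b; c] ->
  (freq M x == 3) && [&& in_row M a x, in_row M b x & in_row M c x] ->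
  rows_of x = [set r in [:: a; b; c]].
Proof.
move=> uniq_abc /andP[/eqP freq3 abc_rows].
by apply: rows_of_freq_seq; rewrite ?freq3 //= andbT.
Qed.

Hypothesis M_class : in_Mclass M.

Lemma card_confined_colours_le (x : C) (R : {set 'I_6}) (Y : {set C}) :
  rows_of x != set0 -> [disjoint R & rows_of x] ->
  (forall y, y \in Y -> rows_of y \subset R) ->
  #|Y| <= #|R| * #|cols_of x|.
Proof.
case: M_class => _ [_ cover] x_occurs disj_R Y_rows.
have x_notin_Y : x \notin Y.
  case/set0Pn: x_occurs => i x_i; apply/negP => /Y_rows/subsetP/(_ i x_i) i_R.
  by rewrite (disjointFr disj_R i_R) in x_i.
rewrite -cardsX; apply: leq_trans (leq_imset_card (fun p => M p.1 p.2) _).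
apply: subset_leq_card; apply/subsetP => y y_in_Y.
have y_rows := subsetP (Y_rows y y_in_Y).
have neq_xy : x != y by apply: contraNneq x_notin_Y => ->.
case: (cover x y neq_xy) => [[i /andP[x_in_i y_in_i]] | [j /andP[x_in_j]]].
  have /y_rows i_in_R : i \in rows_of y by rewrite inE.
  by have := disjointFr disj_R i_in_R; rewrite inE x_in_i.
case/existsP => i /eqP Mij; apply/imsetP; exists (i, j) => //.
rewrite !inE x_in_j andbT; apply: y_rows; rewrite inE.
by apply/existsP; exists j; rewrite Mij.
Qed.

End ColourPositions.

Theorem claim4 (q s : nat) (C : finType) (M : 'I_6 -> 'I_q -> C)
  (i j k l m n : 'I_6) :
  7 <= q -> 1 <= s <= 7 -> #|C| = 2 * q + s -> in_Mclass M ->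
  uniq [:: i; j; k; l; m; n] ->
  1 <= rcount M i j k -> rcount M l m n <= 9.
Proof.
move=> _ _ _ M_class.
rewrite -[[:: i; j; k; l; m; n]]/([:: i; j; k] ++ [:: l; m; n]) cat_uniq.
case/and3P=> uniq_ijk disj_rows uniq_lmn.
rewrite /rcount card_gt0 => /set0Pn [x]; rewrite inE => x_rcount.
have rows_x := rows_of_freq3 uniq_ijk x_rcount.
apply: leq_trans
  (card_confined_colours_le M_class (x := x) (R := [set r in [:: l; m; n]]) _ _ _) _.
- by apply/set0Pn; exists i; rewrite rows_x inE mem_head.
- rewrite rows_x -setI_eq0; apply/set0Pn => -[r].
  rewrite in_setI !in_set => /andP[r_lmn r_ijk].
  by move/hasPn: disj_rows => /(_ r r_lmn); rewrite r_ijk.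
- by move=> y; rewrite inE => /(rows_of_freq3 uniq_lmn) ->.
rewrite cardsE (card_uniqP uniq_lmn) -[9]/(3 * 3) leq_pmul2l //.
by case/andP: x_rcount => /eqP <- _; apply: card_cols_of_le_freq.
Qed.
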